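(* Let $\mathcal T$ be the topograph of a binary quadratic form of discriminant $D$, and let $V$ be a vertex of $\mathcal T$ with adjacent region labels $r,s,t$ (all nonzero) and outgoing edge labels $e=r+t-s$ (the edge between the regions labelled $r$ and $t$), $f=r+s-t$ (between $r$ and $s$), $g=s+t-r$ (between $s$ and $t$), so that $D=-(ef+fg+ge)$. If $D<0$, then for the appropriate branches of $\arcsin$ and $\arctan$, \[ \arcsin\!\Big(\tfrac{e}{rt}\cdot\tfrac{\sqrt{-D}}{2}\Big)+\arcsin\!\Big(\tfrac{f}{rs}\cdot\tfrac{\sqrt{-D}}{2}\Big)+\arcsin\!\Big(\tfrac{g}{st}\cdot\tfrac{\sqrt{-D}}{2}\Big)=0,\qquad \arctan\!\Big(\tfrac{\sqrt{-D}}{e}\Big)+\arctan\!\Big(\tfrac{\sqrt{-D}}{f}\Big)+\arctan\!\Big(\tfrac{\sqrt{-D}}{g}\Big)=0. \] If $D>0$ and $|e|,|f|,|g|>\sqrt D$, then \[ \operatorname{arcsinh}\!\Big(\tfrac{e}{rt}\cdot\tfrac{\sqrt{D}}{2}\Big)+\operatorname{arcsinh}\!\Big(\tfrac{f}{rs}\cdot\tfrac{\sqrt{D}}{2}\Big)+\operatorname{arcsinh}\!\Big(\tfrac{g}{st}\cdot\tfrac{\sqrt{D}}{2}\Big)=0,\qquad \operatorname{arctanh}\!\Big(\tfrac{\sqrt{D}}{e}\Big)+\operatorname{arctanh}\!\Big(\tfrac{\sqrt{D}}{f}\Big)+\operatorname{arctanh}\!\Big(\tfrac{\sqrt{D}}{g}\Big)=0.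 \]
   Context: The topograph of a binary quadratic form $q$: a planar trivalent tree whose vertices are superbases $\{v_1,v_2,v_3\}$ of $\mathbb Z^2$ ($v_1+v_2+v_3=0$, $\{v_1,v_2\}$ a basis, up to overall sign), whose complementary regions correspond to pairs $\pm v$ of primitive vectors labelled $q(v)$. At a vertex with superbase $\{v_1,v_2,v_3\}$, the three adjacent regions have labels $q(v_1),q(v_2),q(v_3)$, and the label of an edge oriented outward from the vertex between regions labelled $x,y$, with third region at the vertex labelled $z$, is $x+y-z$. The discriminant $D$ of $q$ equals $-(ef+fg+ge)$ at every vertex. *)

From Stdlib Require Import Reals ZArith Lra Lia.
Open Scope R_scope.

Definition qform : Type := (Z * Z * Z)%type.

Definition qeval (q : qform) (v : Z * Z) : Z :=
  let '(a, b, c) := q in let '(x, y) := v in (a*x*x + b*x*y + c*y*y)%Z.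

Definition qdisc (q : qform) : Z :=
  let '(a, b, c) := q in (b*b - 4*a*c)%Z.

Definition vneg (v : Z * Z) : Z * Z := ((- fst v)%Z, (- snd v)%Z).
Definition vadd (v w : Z * Z) : Z * Z := ((fst v + fst w)%Z, (snd v + snd w)%Z).
Definition det2 (v w : Z * Z) : Z := (fst v * snd w - snd v * fst w)%Z.

(* {v1, v2, v3} is a superbase of Z^2: {v1,v2} a basis and v1+v2+v3 = 0.
   A vertex of the topograph is such a superbase (up to overall sign, which
   does not change the labels q(v_i)). *)
Definition superbase (v1 v2 v3 : Z * Z) : Prop :=
  (det2 v1 v2 = 1%Z \/ det2 v1 v2 = (-1)%Z) /\ v3 = vneg (vadd v1 v2).

Definition arctanh (x : R) : R := / 2 * ln ((1 + x) / (1 - x)).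

From Stdlib Require Import Reals ZArith Lra.
Open Scope R_scope.

(* At a vertex the region labels are the half-sums r = (e+f)/2, s = (f+g)/2,
   t = (e+g)/2 of the edge labels, so 4rt = e^2 - D, 4rs = f^2 - D and
   4st = g^2 - D, where D = -(ef+fg+ge) is det(v1,v2)^2 times the
   discriminant of q.

   For D < 0 put d = sqrt(-D) and choose angles with e sin φ = d cos φ and
   f sin ψ = d cos ψ (cotangents rather than tangents, since an edge label
   may vanish).  The addition formula for the cotangent, together with
   d^2 = ef+fg+ge, shows that -(φ+ψ) is an angle of the same kind for g; this
   is the arctangent identity.  Doubling the angles gives
   sin 2φ = 2ed/(e^2+d^2) = (e/rt)(d/2), the arcsine identity.

   For D > 0 put d = sqrt D.  Then (e+d)(f+d)(g+d) = (e-d)(f-d)(g-d), since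
   the difference is 2d(ef+fg+ge+d^2) = 0; this is the arctanh identity, and
   arcsinh (2y/(1-y^2)) = 2 arctanh y turns it into the arcsinh identity. *)

Lemma vertex_labels_disc (q : qform) (v1 v2 : Z * Z) :
  let r := qeval q v1 in
  let s := qeval q v2 in
  let t := qeval q (vneg (vadd v1 v2)) in
  (det2 v1 v2 ^ 2 * qdisc q
   = - ((r + t - s) * (r + s - t) + (r + s - t) * (s + t - r)
        + (s + t - r) * (r + t - s)))%Z.
Proof.
  destruct q as [[a b] c], v1 as [x1 y1], v2 as [x2 y2].
  unfold det2, vneg, vadd, qeval, qdisc; cbn [fst snd]; ring.
Qed.

Lemma superbase_disc (q : qform) (v1 v2 v3 : Z * Z) :
  superbase v1 v2 v3 ->
  let r := qeval q v1 in
  let s := qeval q v2 in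
  let t := qeval q v3 in
  qdisc q
  = (- ((r + t - s) * (r + s - t) + (r + s - t) * (s + t - r)
        + (s + t - r) * (r + t - s)))%Z.
Proof.
  intros [Hdet ->]; cbv zeta.
  rewrite <- vertex_labels_disc.
  destruct Hdet as [-> | ->]; ring.
Qed.

Lemma exists_cot_angle (E d : R) : d <> 0 -> exists ph, E * sin ph = d * cos ph.
Proof.
  intros Hd; exists (PI / 2 - atan (E / d)).
  rewrite sin_shift, cos_shift, sin_atan, cos_atan.
  assert (Hsqrt : 0 < sqrt (1 + (E / d)²)).
  { apply sqrt_lt_R0; pose proof (Rle_0_sqr (E / d)); lra. }
  field; split; lra.
Qed.

Lemma sin_double_of_cot (E d ph : R) :
  d <> 0 -> E * sin ph = d * cos ph -> sin (2 * ph) = 2 * E * d / (E ^ 2 + d ^ 2).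
Proof.
  intros Hd Hcot.
  assert (Hpos : 0 < E ^ 2 + d ^ 2) by nra.
  assert (Hcos : cos ph = E * sin ph / d).
  { apply (Rmult_eq_reg_l d); [rewrite <- Hcot; field |]; exact Hd. }
  assert (Hsin2 : sin ph ^ 2 = d ^ 2 / (E ^ 2 + d ^ 2)).
  { pose proof (sin2_cos2 ph) as Hpyth; unfold Rsqr in Hpyth.
    rewrite Hcos in Hpyth.
    apply (Rmult_eq_reg_r (E ^ 2 + d ^ 2)); [| lra].
    replace (sin ph ^ 2 * (E ^ 2 + d ^ 2))
      with ((sin ph * sin ph + E * sin ph / d * (E * sin ph / d)) * d ^ 2)
      by (field; exact Hd).
    rewrite Hpyth; field; lra. }
  rewrite sin_2a, Hcos.
  replace (2 * sin ph * (E * sin ph / d)) with (2 * E * sin ph ^ 2 / d)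
    by (field; exact Hd).
  rewrite Hsin2; field; split; lra.
Qed.

Lemma cot_angle_opp_add (E F G d a b : R) :
  d <> 0 -> d ^ 2 = E * F + F * G + G * E ->
  E * sin a = d * cos a -> F * sin b = d * cos b ->
  G * sin (- (a + b)) = d * cos (- (a + b)).
Proof.
  intros Hd Hdisc Ha Hb.
  assert (Hcos : forall X ph, X * sin ph = d * cos ph -> cos ph = X * sin ph / d).
  { intros X ph Hph; apply (Rmult_eq_reg_l d); [rewrite <- Hph; field |]; exact Hd. }
  rewrite sin_neg, cos_neg, sin_plus, cos_plus, (Hcos E a Ha), (Hcos F b Hb).
  assert (Hdiff :
    G * - (sin a * (F * sin b / d) + E * sin a / d * sin b)
    - d * (E * sin a / d * (F * sin b / d) - sin a * sin b)
    = sin a * sin b / d * (d ^ 2 - (E * F + F * G + G * E)))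
    by (field; exact Hd).
  rewrite Hdisc, Rminus_diag, Rmult_0_r in Hdiff; lra.
Qed.

Lemma div_lt_abs_bound (d X : R) : 0 <= d < Rabs X -> -1 < d / X < 1.
Proof.
  intros Hd.
  assert (HX : 0 < Rabs X) by lra.
  enough (Habs : Rabs (d / X) < 1) by (apply Rabs_def2 in Habs; lra).
  unfold Rdiv; rewrite Rabs_mult, Rabs_inv, (Rabs_pos_eq d) by lra.
  apply (Rmult_lt_reg_r (Rabs X)); [exact HX |].
  field_simplify; lra.
Qed.

Lemma arctanh_sum3 (x y z : R) :
  -1 < x < 1 -> -1 < y < 1 -> -1 < z < 1 -> x + y + z + x * y * z = 0 ->
  arctanh x + arctanh y + arctanh z = 0.
Proof.
  intros Hx Hy Hz Hsum.
  assert (Hratio : forall u, -1 < u < 1 -> 0 < (1 + u) / (1 - u))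
    by (intros u Hu; apply Rdiv_lt_0_compat; lra).
  unfold arctanh.
  rewrite <- !Rmult_plus_distr_l, <- !ln_mult
    by auto using Rmult_lt_0_compat.
  replace ((1 + x) / (1 - x) * ((1 + y) / (1 - y)) * ((1 + z) / (1 - z))) with 1.
  - rewrite ln_1; ring.
  - (* (1+x)(1+y)(1+z) - (1-x)(1-y)(1-z) = 2 (x + y + z + xyz) *)
    field_simplify_eq; [nra | repeat split; lra].
Qed.

Lemma arcsinh_double_arctanh (y : R) :
  -1 < y < 1 -> arcsinh (2 * y / (1 - y ^ 2)) = 2 * arctanh y.
Proof.
  intros Hy.
  rewrite <- (arcsinh_sinh (2 * arctanh y)); f_equal.
  unfold sinh, arctanh.
  replace (2 * (/ 2 * ln ((1 + y) / (1 - y)))) with (ln ((1 + y) / (1 - y)))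
    by field.
  rewrite exp_Ropp, exp_ln by (apply Rdiv_lt_0_compat; lra).
  field; split; nra.
Qed.

Lemma sin_double_label (X W Z d ph : R) :
  W <> 0 -> Z <> 0 -> d <> 0 -> 4 * (W * Z) = X ^ 2 + d ^ 2 ->
  X * sin ph = d * cos ph -> sin (2 * ph) = X / (W * Z) * (d / 2).
Proof.
  intros HW HZ Hd Hprod Hcot.
  rewrite (sin_double_of_cot X d ph Hd Hcot), <- Hprod.
  field; auto.
Qed.

Lemma arcsinh_label (X W Z d : R) :
  W <> 0 -> Z <> 0 -> 0 <= d < Rabs X -> 4 * (W * Z) = X ^ 2 - d ^ 2 ->
  arcsinh (X / (W * Z) * (d / 2)) = 2 * arctanh (d / X).
Proof.
  intros HW HZ Hd Hprod.
  assert (HX : X <> 0) by (intros ->; rewrite Rabs_R0 in Hd; lra).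
  rewrite <- (arcsinh_double_arctanh (d / X)) by (apply div_lt_abs_bound; exact Hd).
  f_equal.
  replace (W * Z) with ((X ^ 2 - d ^ 2) / 4) by lra.
  assert (HXd : X ^ 2 - d ^ 2 <> 0).
  { rewrite <- (pow2_abs X); nra. }
  field; auto.
Qed.

Section TopographVertex.

Variables r s t e f g : R.
Hypotheses (He : e = r + t - s) (Hf : f = r + s - t) (Hg : g = s + t - r).
Hypotheses (Hr : r <> 0) (Hs : s <> 0) (Ht : t <> 0).

Lemma vertex_prod_labels :
  4 * (r * t) = e ^ 2 + (e * f + f * g + g * e) /\
  4 * (r * s) = f ^ 2 + (e * f + f * g + g * e) /\
  4 * (s * t) = g ^ 2 + (e * f + f * g + g * e).
Proof. subst e f g; repeat split; ring. Qed.

Lemma vertex_angles_neg (D : R) :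
  D = - (e * f + f * g + g * e) -> D < 0 ->
  (exists th1 th2 th3 : R,
     sin th1 = e / (r * t) * (sqrt (- D) / 2) /\
     sin th2 = f / (r * s) * (sqrt (- D) / 2) /\
     sin th3 = g / (s * t) * (sqrt (- D) / 2) /\
     th1 + th2 + th3 = 0) /\
  (exists ph1 ph2 ph3 : R,
     e * sin ph1 = sqrt (- D) * cos ph1 /\
     f * sin ph2 = sqrt (- D) * cos ph2 /\
     g * sin ph3 = sqrt (- D) * cos ph3 /\
     ph1 + ph2 + ph3 = 0).
Proof.
  intros HD Hneg.
  destruct vertex_prod_labels as (Hrt & Hrs & Hst).
  set (d := sqrt (- D)).
  assert (Hd : d <> 0) by (apply Rgt_not_eq, sqrt_lt_R0; lra).
  assert (Hdisc : d ^ 2 = e * f + f * g + g * e) by (unfold d; rewrite pow2_sqrt; lra).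
  rewrite <- Hdisc in Hrt, Hrs, Hst.
  clearbody d.
  destruct (exists_cot_angle e d Hd) as [ph1 H1].
  destruct (exists_cot_angle f d Hd) as [ph2 H2].
  pose proof (cot_angle_opp_add e f g d ph1 ph2 Hd Hdisc H1 H2) as H3.
  split.
  - exists (2 * ph1), (2 * ph2), (2 * - (ph1 + ph2)); repeat split;
      [ apply (sin_double_label e) | apply (sin_double_label f)
      | apply (sin_double_label g) | ring ]; assumption.
  - exists ph1, ph2, (- (ph1 + ph2)); repeat split; [assumption .. | ring].
Qed.

Lemma vertex_hyperbolic_pos (D : R) :
  D = - (e * f + f * g + g * e) -> 0 < D ->
  sqrt D < Rabs e -> sqrt D < Rabs f -> sqrt D < Rabs g ->
  arcsinh (e / (r * t) * (sqrt D / 2)) +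
  arcsinh (f / (r * s) * (sqrt D / 2)) +
  arcsinh (g / (s * t) * (sqrt D / 2)) = 0 /\
  arctanh (sqrt D / e) + arctanh (sqrt D / f) + arctanh (sqrt D / g) = 0.
Proof.
  intros HD Hpos Hde Hdf Hdg.
  destruct vertex_prod_labels as (Hrt & Hrs & Hst).
  set (d := sqrt D) in *.
  assert (Hd : 0 <= d) by apply sqrt_pos.
  assert (Hdisc : e * f + f * g + g * e = - d ^ 2) by (unfold d; rewrite pow2_sqrt; lra).
  rewrite Hdisc in Hrt, Hrs, Hst.
  clearbody d.
  assert (Hnz : forall X, d < Rabs X -> X <> 0)
    by (intros X HX ->; rewrite Rabs_R0 in HX; lra).
  assert (Htanh : arctanh (d / e) + arctanh (d / f) + arctanh (d / g) = 0).
  { apply arctanh_sum3; try (apply div_lt_abs_bound; lra).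
    assert (Hsum : d / e + d / f + d / g + d / e * (d / f) * (d / g)
                   = d / (e * f * g) * (e * f + f * g + g * e + d ^ 2))
      by (field; auto).
    rewrite Hsum, Hdisc; ring. }
  split; [| exact Htanh].
  rewrite (arcsinh_label e r t d), (arcsinh_label f r s d), (arcsinh_label g s t d)
    by (auto; lra).
  lra.
Qed.

End TopographVertex.

Theorem lemma1 (q : qform) (v1 v2 v3 : Z * Z) :
  superbase v1 v2 v3 ->
  let r := qeval q v1 in
  let s := qeval q v2 in
  let t := qeval q v3 in
  let e := (r + t - s)%Z in
  let f := (r + s - t)%Z in
  let g := (s + t - r)%Z in
  let D := qdisc q in
  r <> 0%Z -> s <> 0%Z -> t <> 0%Z ->
  D = (- (e*f + f*g + g*e))%Z /\
  ((D < 0)%Z ->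
     (exists th1 th2 th3 : R,
        sin th1 = IZR e / (IZR r * IZR t) * (sqrt (- IZR D) / 2) /\
        sin th2 = IZR f / (IZR r * IZR s) * (sqrt (- IZR D) / 2) /\
        sin th3 = IZR g / (IZR s * IZR t) * (sqrt (- IZR D) / 2) /\
        th1 + th2 + th3 = 0) /\
     (exists ph1 ph2 ph3 : R,
        (* "tan ph = sqrt(-D)/e", written as e sin ph = sqrt(-D) cos ph *)
        IZR e * sin ph1 = sqrt (- IZR D) * cos ph1 /\
        IZR f * sin ph2 = sqrt (- IZR D) * cos ph2 /\
        IZR g * sin ph3 = sqrt (- IZR D) * cos ph3 /\
        ph1 + ph2 + ph3 = 0)) /\
  ((0 < D)%Z ->
     sqrt (IZR D) < Rabs (IZR e) ->
     sqrt (IZR D) < Rabs (IZR f) ->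
     sqrt (IZR D) < Rabs (IZR g) ->
     arcsinh (IZR e / (IZR r * IZR t) * (sqrt (IZR D) / 2)) +
     arcsinh (IZR f / (IZR r * IZR s) * (sqrt (IZR D) / 2)) +
     arcsinh (IZR g / (IZR s * IZR t) * (sqrt (IZR D) / 2)) = 0 /\
     arctanh (sqrt (IZR D) / IZR e) +
     arctanh (sqrt (IZR D) / IZR f) +
     arctanh (sqrt (IZR D) / IZR g) = 0).
Proof.
  intros Hsb r s t e f g D Hr Hs Ht.
  assert (HD : D = (- (e * f + f * g + g * e))%Z) by exact (superbase_disc q v1 v2 v3 Hsb).
  assert (HDR : IZR D = - (IZR e * IZR f + IZR f * IZR g + IZR g * IZR e))
    by (rewrite HD, opp_IZR, !plus_IZR, !mult_IZR; reflexivity).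
  assert (He : IZR e = IZR r + IZR t - IZR s) by (unfold e; rewrite minus_IZR, plus_IZR; reflexivity).
  assert (Hf : IZR f = IZR r + IZR s - IZR t) by (unfold f; rewrite minus_IZR, plus_IZR; reflexivity).
  assert (Hg : IZR g = IZR s + IZR t - IZR r) by (unfold g; rewrite minus_IZR, plus_IZR; reflexivity).
  apply not_0_IZR in Hr, Hs, Ht.
  split; [exact HD | split].
  - intros Hneg; apply IZR_lt in Hneg.
    exact (vertex_angles_neg _ _ _ _ _ _ He Hf Hg Hr Hs Ht (IZR D) HDR Hneg).
  - intros Hpos; apply IZR_lt in Hpos.
    exact (vertex_hyperbolic_pos _ _ _ _ _ _ He Hf Hg Hr Hs Ht (IZR D) HDR Hpos).
Qed.
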